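(* Let $G=(V,E)$ be a finite directed graph with $n=|V|$, positive edge capacities $c(e)$, and buffer size $B\ge 0$ at every vertex; let $G^{st}$ be its space-time graph and $R=\{r_i\}$ a sequence of requests $r_i=(a_i,b_i,t_i)$ over $G^{st}$. Let $c_{\min}=\min_{e\in E}c(e)$, $\alpha=\frac{c_{\min}}{2(\sum_{e\in E}c(e)+n\cdot B)}$, $\nu=1/\alpha$, and let $p_{\max}\ge(\nu+2)\cdot\mathrm{diam}(G)$. Then $$|\mathrm{OPT}_f(R\mid p_{\max})|\ge\frac12\left(1-\frac1e\right)|\mathrm{OPT}_f(R)|.$$
   Context: The space-time graph $G^{st}$ of $G$ has vertex set $V\times\mathbb{N}$ and edges $(u,t)\to(v,t+1)$ for every $(u,v)\in E$ and $t\in\mathbb{N}$, with capacity $c(u,v)$, and $(u,t)\to(u,t+1)$ for every $u\in V$, $t\in\mathbb{N}$, with capacity $B$. A request $r_i=(a_i,b_i,t_i)$ asks for a path in $G^{st}$ from $(a_i,t_i)$ to some vertex $(b_i,t)$ with $t\ge t_i$. A fractional path packing assigns nonnegative flow amounts to such paths, with total at most $1$ per request and total flow through each edge of $G^{st}$ at most its capacity; its throughput is the total assigned flow. $|\mathrm{OPT}_f(R)|$ is the maximum throughput of a fractional path packing for $R$, and $|\mathrm{OPT}_f(R\mid p_{\max})|$ is the maximum throughput of a fractional path packing for $R$ using only paths with at most $p_{\max}$ edges. $\mathrm{dist}_G(u,v)$ is the length of a shortest directed path from $u$ to $v$ in $G$, and $\mathrm{diam}(G)=\max\{\mathrm{dist}_G(u,v):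 \text{there is a path from } u \text{ to } v\}$. *)

From HB Require Import structures.
From mathcomp Require Import all_boot all_order all_algebra.
From mathcomp Require Import boolp classical_sets reals.
From mathcomp.analysis Require Import sequences exp.
Set Implicit Arguments. Unset Strict Implicit. Unset Printing Implicit Defensive.
Import Order.TTheory GRing.Theory Num.Theory.
Local Open Scope ring_scope.
Local Open Scope classical_set_scope.

Fixpoint kstep (V : finType) (E : rel V) (k : nat) (u v : V) : bool :=
  match k with
  | 0 => u == v
  | k'.+1 => [exists w, E u w && kstep E k' w v]
  end.

(* dist_G(u,v): length of a shortest directed path (0 if v is unreachable) *)
Definition dist (V : finType) (E : rel V) (u v : V) : nat :=
  match pselect (exists k, kstep E k u v) with
  | left H => ex_minn H
  | right _ => 0%N
  end.

Definition diam (V : finType) (E : rel V) : nat :=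
  \max_(p : V * V | `[< exists k, kstep E k p.1 p.2 >]) dist E p.1 p.2.

(* A path in G^st starting at (u,t) is encoded by its sequence of moves:
   [None] = buffer edge (w,s)->(w,s+1);  [Some v] = graph edge (w,s)->(v,s+1).
   An edge of G^st is encoded as (w, s, m): tail vertex w, tail time s, move m. *)
Definition stedge (V : finType) := (V * nat * option V)%type.

Fixpoint st_edges (V : finType) (u : V) (t : nat) (ms : seq (option V))
  : seq (stedge V) :=
  match ms with
  | [::] => [::]
  | m :: ms' => (u, t, m) :: st_edges (odflt u m) t.+1 ms'
  end.

Fixpoint st_end (V : finType) (u : V) (ms : seq (option V)) : V :=
  match ms with
  | [::] => u
  | m :: ms' => st_end (odflt u m) ms'
  end.

Definition is_stedge (V : finType) (E : rel V) (e : stedge V) : bool :=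
  match e.2 with None => true | Some v => E e.1.1 v end.

Definition st_cap (R : realType) (V : finType) (c : V -> V -> R) (B : R)
  (e : stedge V) : R :=
  match e.2 with None => B | Some v => c e.1.1 v end.

(* a request r = (a, b, t) *)
Definition request (V : finType) := (V * V * nat)%type.

(* ms encodes a path of G^st from (a,t) to some (b,t') (t' >= t automatically) *)
Definition path_for (V : finType) (E : rel V) (r : request V)
  (ms : seq (option V)) : bool :=
  all (is_stedge E) (st_edges r.1.1 r.2 ms) && (st_end r.1.1 ms == r.1.2).

(* A (finitely supported) fractional path packing for requests Rq : 'I_k -> request:
   a list of entries (i, path, amount). *)
Definition packing (R : realType) (V : finType) (k : nat) :=
  seq ('I_k * seq (option V) * R)%type.

Definition edge_flow (R : realType) (V : finType) (k : nat)
  (Rq : 'I_k -> request V) (P : packing R V k) (e : stedge V) : R :=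
  \sum_(x <- P) x.2 * (count_mem e (st_edges (Rq x.1.1).1.1 (Rq x.1.1).2 x.1.2))%:R.

Definition feasible (R : realType) (V : finType) (E : rel V) (c : V -> V -> R)
  (B : R) (k : nat) (Rq : 'I_k -> request V) (L : seq (option V) -> bool)
  (P : packing R V k) : Prop :=
  [/\ (forall x, x \in P -> [/\ 0 <= x.2, path_for E (Rq x.1.1) x.1.2 & L x.1.2]),
      (forall i : 'I_k, \sum_(x <- P | x.1.1 == i) x.2 <= 1) &
      (forall e : stedge V, is_stedge E e -> edge_flow Rq P e <= st_cap c B e)].

Definition throughput (R : realType) (V : finType) (k : nat) (P : packing R V k) : R :=
  \sum_(x <- P) x.2.

Definition OPT_f_with (R : realType) (V : finType) (E : rel V) (c : V -> V -> R)
  (B : R) (k : nat) (Rq : 'I_k -> request V) (L : seq (option V) -> bool) : R :=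
  sup [set throughput P | P in [set P : packing R V k | feasible E c B Rq L P]].

Definition OPT_f (R : realType) (V : finType) (E : rel V) (c : V -> V -> R)
  (B : R) (k : nat) (Rq : 'I_k -> request V) : R :=
  OPT_f_with E c B Rq xpredT.

Definition OPT_f_len (R : realType) (V : finType) (E : rel V) (c : V -> V -> R)
  (B : R) (k : nat) (Rq : 'I_k -> request V) (pmax : nat) : R :=
  OPT_f_with E c B Rq (fun ms => (size ms <= pmax)%N).

From HB Require Import structures.
From mathcomp Require Import all_boot all_order all_algebra.
From mathcomp Require Import boolp classical_sets reals.
From mathcomp.analysis Require Import sequences exp.
From mathcomp Require Import zify ring lra.
Import Order.TTheory GRing.Theory Num.Theory.
Set Implicit Arguments. Unset Strict Implicit. Unset Printing Implicit Defensive.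

(* Given a feasible packing P, halve it and replace every path longer than
   pmax by W = pmax - diam + 1 equally weighted shortcuts: follow the path for
   tau < W steps, then take a shortest path (at most diam edges) to the
   destination.  The shortcuts have at most pmax edges, the throughput is
   exactly halved, and the halved old paths use at most half of every
   capacity.  A shortcut segment starting at time t + tau occupies time slots
   [t + tau, t + tau + diam), so at a fixed time s it is charged to the flow
   that was alive at one of the diam times s - j; as all flow alive at one time
   fits into the total capacity S of a time slice, the shortcut segments put at
   most diam * S / (2 W) <= cmin / 2 on each edge, which is exactly what
   pmax >= (nu + 2) diam guarantees.  Hence OPT_f <= 2 OPT_f(pmax), which is
   stronger than the claim. *)

Lemma range_indicator_sum (a n s : nat) :
  (a <= s < a + n)%N = (\sum_(j < n) (a + j == s))%N :> nat.
Proof.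
rewrite -mem_iota -count_uniq_mem ?iota_uniq // -[a]addn0 iotaDl count_map.
rewrite -sum1_count big_mkcond /= addn0 -[n in iota 0 n]subn0 big_mkord.
by apply: eq_bigr => j _; case: eqP.
Qed.

Lemma sum_option (R : nmodType) (V : finType) (f : option V -> R) :
  (\sum_(o : option V) f o = f None + \sum_(v : V) f (Some v))%R.
Proof.
rewrite (bigD1 None) //= (reindex_omap Some id) //=; last by case.
by congr (_ + _)%R; apply: eq_bigl => v; rewrite eqxx.
Qed.

Section SpaceTimePaths.
Variable V : finType.

Lemma st_end_cat (u : V) ms1 ms2 :
  st_end u (ms1 ++ ms2) = st_end (st_end u ms1) ms2.
Proof. by elim: ms1 u => //= m ms IH u; rewrite IH. Qed.

Lemma st_edges_cat (u : V) t ms1 ms2 :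
  st_edges u t (ms1 ++ ms2) =
  st_edges u t ms1 ++ st_edges (st_end u ms1) (t + size ms1) ms2.
Proof.
elim: ms1 u t => [|m ms IH] u t /=; first by rewrite addn0.
by rewrite IH addSnnS.
Qed.

Lemma count_st_edges_at (u : V) t ms s :
  count (fun e : stedge V => e.1.2 == s) (st_edges u t ms) = (t <= s < t + size ms).
Proof.
elim: ms u t => [|m ms IH] u t /=; first by rewrite addn0; lia.
by rewrite IH /= addnS; case: eqVneq => [->|]; lia.
Qed.

Lemma st_edges_map_Some_moves (u : V) t sp :
  all (fun e : stedge V => e.2 != None) (st_edges u t (map Some sp)).
Proof. by elim: sp u t => //= v sp IH u t; rewrite IH. Qed.

Lemma st_end_map_Some (u : V) sp : st_end u (map Some sp) = last u sp.
Proof. by elim: sp u => //= v sp IH u; rewrite IH. Qed.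

Lemma sum_count_slice (L : seq (stedge V)) s :
  (\sum_(wm : V * option V) count_mem (wm.1, s, wm.2) L)%N =
  count (fun e : stedge V => e.1.2 == s) L.
Proof.
elim: L => [|[[a t] m] L IH] /=; first by rewrite big1.
rewrite big_split /= IH; congr (_ + _)%N.
have [->|Hts] := eqVneq t s.
  rewrite (bigD1 (a, m)) //= eqxx big1 ?addn0 // => -[w mm] /= Hne.
  by apply/eqP; rewrite eqb0; apply: contra Hne => /eqP [-> ->].
rewrite big1 // => -[w mm] _; apply/eqP; rewrite eqb0.
by apply: contra Hts => /eqP [_ ->].
Qed.

Variable E : rel V.

Lemma all_is_stedge_map_Some (u : V) t sp :
  all (is_stedge E) (st_edges u t (map Some sp)) = path E u sp.
Proof. by elim: sp u t => //= v sp IH u t; rewrite IH. Qed.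

Lemma kstep_st_end (u : V) t ms :
  all (is_stedge E) (st_edges u t ms) -> exists n, kstep E n u (st_end u ms).
Proof.
elim: ms u t => [|m ms IH] u t /=; first by move=> _; exists 0%N; rewrite /= eqxx.
case/andP => Hm /IH [n Hn]; case: m Hm Hn => [v|] /= Hm Hn; last by exists n.
by exists n.+1; apply/existsP; exists v; apply/andP.
Qed.

Lemma kstepP n (u v : V) :
  reflect (exists2 s : n.-tuple V, path E u s & last u s = v) (kstep E n u v).
Proof.
elim: n u => [|n IH] u /=.
  by apply: (iffP eqP) => [->|[s _ <-]]; [exists [tuple] | rewrite tuple0].
apply: (iffP existsP) => [[w /andP [Euw /IH [s Hs Hl]]] | [s]].
  by exists [tuple of w :: s] => //=; rewrite Euw.
case/tupleP: s => w s /= /andP [Euw Hs] Hl.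
by exists w; rewrite Euw; apply/IH; exists s.
Qed.

Lemma dist_kstep (u v : V) : (exists n, kstep E n u v) -> kstep E (dist E u v) u v.
Proof. by move=> H; rewrite /dist; case: pselect => // ?; case: ex_minnP. Qed.

Lemma dist_le_diam (u v : V) : (exists n, kstep E n u v) -> (dist E u v <= diam E)%N.
Proof.
move=> H; apply: (@leq_bigmax_cond _ _ (fun p : V * V => dist E p.1 p.2) (u, v)).
exact/asboolP.
Qed.

(* [::] when v is unreachable from u *)
Definition shortest_path (u v : V) : seq V :=
  odflt [::] (omap val
    [pick s : (dist E u v).-tuple V | path E u s && (last u s == v)]).

Lemma shortest_pathP (u v : V) : (exists n, kstep E n u v) ->
  path E u (shortest_path u v) /\ last u (shortest_path u v) = v.
Proof.
move=> /dist_kstep /kstepP [s0 Hp0 Hl0].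
rewrite /shortest_path; case: pickP => [s /andP [Hp /eqP Hl] // | /(_ s0)].
by rewrite Hp0 Hl0 eqxx.
Qed.

Lemma size_shortest_path (u v : V) : (size (shortest_path u v) <= diam E)%N.
Proof.
rewrite /shortest_path; case: pickP => [s /andP [Hp /eqP Hl] | _] //=.
rewrite size_tuple; apply: dist_le_diam; exists (size s).
by apply/kstepP; exists (in_tuple s).
Qed.

End SpaceTimePaths.

Local Open Scope ring_scope.

Section SliceCapacity.
Variables (R : realType) (V : finType) (E : rel V) (c : V -> V -> R) (B : R).

Definition slice_capacity : R :=
  \sum_(p : V * V | E p.1 p.2) c p.1 p.2 + #|V|%:R * B.

Lemma sum_st_cap_slice s :
  \sum_(wm : V * option V)
    (if is_stedge E (wm.1, s, wm.2) then st_cap c B (wm.1, s, wm.2) else 0)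
  = slice_capacity.
Proof.
rewrite /slice_capacity -(pair_bigA _ (fun w o =>
  if is_stedge E (w, s, o) then st_cap c B (w, s, o) else 0)) /=.
rewrite [in RHS]big_mkcond -(pair_bigA _ (fun w v => if E w v then c w v else 0)) /=.
under eq_bigr do rewrite sum_option.
by rewrite big_split /= sumr_const addrC mulr_natl.
Qed.

Hypotheses (c_gt0 : forall u v, E u v -> 0 < c u v) (B_ge0 : 0 <= B).

Lemma slice_capacity_gt0 : (exists u v, E u v) -> 0 < slice_capacity.
Proof.
move=> [u [v Euv]]; rewrite /slice_capacity ltr_wpDr ?mulr_ge0 //.
rewrite (bigD1 (u, v)) //= ltr_wpDr ?c_gt0 // sumr_ge0 // => p /andP [Ep _].
exact/ltW/c_gt0.
Qed.

Lemma st_cap_ge0 e : is_stedge E e -> 0 <= st_cap c B e.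
Proof. by case: e => [[u s] [v|]] //= /c_gt0/ltW. Qed.

Lemma feasible_nil k (Rq : 'I_k -> request V) L :
  feasible E c B Rq L ([::] : packing R V k).
Proof.
split=> // [i|e He]; first by rewrite big_nil.
by rewrite /edge_flow big_nil st_cap_ge0.
Qed.

Lemma throughput_le_requests k (Rq : 'I_k -> request V) L (P : packing R V k) :
  feasible E c B Rq L P -> throughput P <= k%:R.
Proof.
case=> _ Hreq _; rewrite /throughput (partition_big (fun x => x.1.1) xpredT) //=.
apply: le_trans (_ : _ <= \sum_(i < k) 1) _; last by rewrite sumr_const card_ord.
by apply: ler_sum => i _; exact: Hreq.
Qed.

Lemma alive_flow_le_slice_capacity k (Rq : 'I_k -> request V) L (P : packing R V k) s :
  feasible E c B Rq L P ->
  \sum_(x <- P) x.2 * ((Rq x.1.1).2 <= s < (Rq x.1.1).2 + size x.1.2)%N%:R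
    <= slice_capacity.
Proof.
case=> Hx _ Hf; rewrite -(sum_st_cap_slice s).
have -> : \sum_(x <- P) x.2 * ((Rq x.1.1).2 <= s < (Rq x.1.1).2 + size x.1.2)%N%:R =
          \sum_(wm : V * option V) edge_flow Rq P (wm.1, s, wm.2).
  rewrite /edge_flow exchange_big /=; apply: eq_bigr => x _.
  by rewrite -(count_st_edges_at (Rq x.1.1).1.1) -sum_count_slice natr_sum mulr_sumr.
apply: ler_sum => wm _; case: ifP => Hst; first exact: Hf.
rewrite /edge_flow big1_seq // => x /andP [_ /Hx [_ /andP [Hall _] _]].
rewrite (_ : count_mem _ _ = 0%N) ?mulr0 //; apply/count_memPn.
by apply: contraFN Hst => /(allP Hall).
Qed.

End SliceCapacity.

Section ShortcutPacking.
Variables (R : realType) (V : finType) (E : rel V) (c : V -> V -> R) (B : R)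
  (k : nat) (Rq : 'I_k -> request V) (pmax : nat).

Let D := diam E.
Let W := (pmax - D).+1.

Definition shortcut (r : request V) (ms : seq (option V)) (tau : nat) :=
  take tau ms ++ map Some (shortest_path E (st_end r.1.1 (take tau ms)) r.1.2).

Definition shortcut_entries (x : 'I_k * seq (option V) * R) : packing R V k :=
  if (size x.1.2 <= pmax)%N then [:: (x.1.1, x.1.2, x.2 / 2)]
  else [seq (x.1.1, shortcut (Rq x.1.1) x.1.2 tau, x.2 / (2 * W%:R)) | tau <- iota 0 W].

Definition shortcut_packing (P : packing R V k) : packing R V k :=
  flatten (map shortcut_entries P).

Lemma sum_shortcut_entries x (Pr : pred 'I_k) :
  \sum_(y <- shortcut_entries x | Pr y.1.1) y.2 = if Pr x.1.1 then x.2 / 2 else 0.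
Proof.
rewrite /shortcut_entries; case: ifP => _.
  by rewrite big_cons big_nil /=; case: ifP; rewrite ?addr0.
rewrite big_map (eq_bigl (fun _ => Pr x.1.1)) //.
case: (Pr x.1.1); last by rewrite big_pred0.
rewrite -[iota 0 W]/(index_iota 0 W) sumr_const_nat subn0 -mulr_natr.
by field; rewrite pnatr_eq0.
Qed.

Lemma sum_shortcut_packing P (Pr : pred 'I_k) :
  \sum_(y <- shortcut_packing P | Pr y.1.1) y.2 = (\sum_(x <- P | Pr x.1.1) x.2) / 2.
Proof.
rewrite big_flatten big_map /= mulr_suml [RHS]big_mkcond /=.
by apply: eq_bigr => x _; rewrite sum_shortcut_entries; case: ifP; rewrite ?mul0r.
Qed.

Lemma throughput_shortcut_packing P :
  throughput (shortcut_packing P) = throughput P / 2.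
Proof. exact: (sum_shortcut_packing P xpredT). Qed.

Lemma shortcut_path_for r ms tau : path_for E r ms -> (tau <= size ms)%N ->
  path_for E r (shortcut r ms tau) /\ (size (shortcut r ms tau) <= tau + D)%N.
Proof.
rewrite /path_for /shortcut => /andP [Hms /eqP Hend] Htau.
move: Hms Hend; rewrite -{1 2}(cat_take_drop tau ms) st_edges_cat st_end_cat all_cat.
case/andP => Hpre /kstep_st_end Hreach Hend; rewrite Hend in Hreach.
have [Hp Hl] := shortest_pathP Hreach.
split.
  rewrite st_edges_cat st_end_cat all_cat Hpre all_is_stedge_map_Some Hp.
  by rewrite st_end_map_Some Hl /=.
rewrite size_cat size_take_min size_map (minn_idPl Htau) leq_add2l.
exact: size_shortest_path.
Qed.

Lemma count_shortcut r ms tau e : (tau <= size ms)%N ->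
  (count_mem e (st_edges r.1.1 r.2 (shortcut r ms tau)) <=
   count_mem e (st_edges r.1.1 r.2 ms) +
   ((e.2 != None) && (r.2 + tau <= e.1.2 < r.2 + tau + D)))%N.
Proof.
move=> Htau; rewrite /shortcut -[in X in (_ <= X)%N](cat_take_drop tau ms).
rewrite !st_edges_cat !count_cat -addnA leq_add2l size_take_min (minn_idPl Htau).
set w := st_end _ _; set sp := shortest_path _ _ _.
apply: leq_trans (leq_addl _ _).
have [He|He] /= := eqVneq e.2 None.
  rewrite leqn0; apply/eqP/count_memPn/negP => Hin.
  by move/allP: (st_edges_map_Some_moves w (r.2 + tau) sp) => /(_ e Hin); rewrite He.
apply: leq_trans (sub_count (a2 := fun e' : stedge V => e'.1.2 == e.1.2) _ _) _.
  by move=> e' /eqP ->.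
rewrite count_st_edges_at size_map.
have := size_shortest_path E w r.1.2; rewrite -/sp -/D => Hsp.
case: (_ <= e.1.2)%N => //=; case: ltnP => //= h.
by rewrite (leq_trans h) // leq_add2l.
Qed.

(* A shortcut window [t + tau, t + tau + D) containing s is charged to the
   time s - j = t + tau, at which the original path was still alive. *)
Lemma shortcut_window_count t s n m : (n <= m)%N ->
  (\sum_(tau < n) (t + tau <= s < t + tau + D) <=
   \sum_(j < D) ((j <= s) && (t <= s - j < t + m)))%N.
Proof.
move=> Hnm.
under eq_bigr => tau _ do rewrite range_indicator_sum.
rewrite exchange_big /=; apply: leq_sum => j _.
under eq_bigr => tau _ do rewrite addnAC.
rewrite -range_indicator_sum; lia.
Qed.

Definition long_alive_count (x : 'I_k * seq (option V) * R) (s : nat) : nat :=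
  \sum_(j < D) [&& (pmax < size x.1.2)%N, (j <= s)%N &
                  ((Rq x.1.1).2 <= s - j < (Rq x.1.1).2 + size x.1.2)%N].

Let edge_count (x : 'I_k * seq (option V) * R) (e : stedge V) :=
  count_mem e (st_edges (Rq x.1.1).1.1 (Rq x.1.1).2 x.1.2).

Lemma shortcut_entries_flow x e : 0 <= x.2 ->
  \sum_(y <- shortcut_entries x) y.2 * (edge_count y e)%:R <=
  x.2 / 2 * (edge_count x e)%:R +
  x.2 / (2 * W%:R) * ((e.2 != None) * long_alive_count x e.1.2)%N%:R.
Proof.
move=> Hx0; have W0 : W%:R != 0 :> R by rewrite pnatr_eq0.
have Hw0 : 0 <= x.2 / (2 * W%:R) by rewrite divr_ge0 // mulr_ge0.
rewrite /shortcut_entries; case: ifP => Hs.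
  by rewrite big_cons big_nil addr0 /= lerDl mulr_ge0.
move/negbT: Hs; rewrite -ltnNge => Hs.
have HW : (W <= size x.1.2)%N by apply: leq_ltn_trans (leq_subr D pmax) Hs.
rewrite big_map -[iota 0 W]/(index_iota 0 W) big_mkord.
set t := (Rq x.1.1).2; set s := e.1.2; set b := (e.2 != None).
have Hwin : (\sum_(tau < W) (b && (t + tau <= s < t + tau + D))
             <= b * long_alive_count x s)%N.
  case: b; last by rewrite mul0n big1.
  rewrite mul1n; apply: leq_trans (shortcut_window_count t s HW) _.
  by apply: leq_sum => j _; rewrite Hs.
apply: le_trans (_ : _ <= \sum_(tau < W) x.2 / (2 * W%:R) *
                 (edge_count x e + (b && (t + tau <= s < t + tau + D)))%N%:R) _.
  apply: ler_sum => tau _ /=; apply: ler_wpM2l => //; rewrite ler_nat.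
  by apply: count_shortcut; apply: leq_trans HW; apply: ltnW.
rewrite -mulr_sumr -natr_sum big_split /= sum_nat_const card_ord.
apply: le_trans (_ : _ <= x.2 / (2 * W%:R) *
                 (W * edge_count x e + b * long_alive_count x s)%N%:R) _.
  by apply: ler_wpM2l => //; rewrite ler_nat leq_add2l.
by rewrite natrD natrM le_eqVlt; apply/orP; left; apply/eqP; field.
Qed.

Lemma long_alive_flow_le L (P : packing R V k) s :
  feasible E c B Rq L P ->
  \sum_(x <- P) x.2 * (long_alive_count x s)%:R <= D%:R * slice_capacity E c B.
Proof.
move=> Hf; have [Hx0 _ _] := Hf.
under eq_bigr => x _ do rewrite natr_sum mulr_sumr.
rewrite exchange_big /=.
apply: le_trans (_ : _ <= \sum_(j < D) slice_capacity E c B) _; last first.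
  by rewrite sumr_const card_ord mulr_natl.
apply: ler_sum => j _; apply: le_trans (alive_flow_le_slice_capacity (s - j) Hf).
rewrite big_seq [leRHS]big_seq; apply: ler_sum => x /Hx0 [x_ge0 _ _].
by rewrite ler_wpM2l // ler_nat; case: (pmax < _)%N; case: (j <= s)%N.
Qed.

Hypotheses (B_ge0 : 0 <= B) (cmin : R) (cmin_le : forall u v, E u v -> cmin <= c u v).
Hypothesis window_large : D%:R * slice_capacity E c B <= W%:R * cmin.

Lemma shortcut_packing_flow L (P : packing R V k) e :
  feasible E c B Rq L P -> is_stedge E e ->
  edge_flow Rq (shortcut_packing P) e <= st_cap c B e.
Proof.
move=> Hf He; have [Hx0 _ Hfl] := Hf.
have W_neq0 : W%:R != 0 :> R by rewrite pnatr_eq0.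
rewrite /edge_flow /shortcut_packing big_flatten big_map /=.
apply: le_trans (_ : _ <= \sum_(x <- P) (x.2 / 2 * (edge_count x e)%:R +
        x.2 / (2 * W%:R) * ((e.2 != None) * long_alive_count x e.1.2)%N%:R)) _.
  rewrite big_seq [leRHS]big_seq; apply: ler_sum => x /Hx0 [x_ge0 _ _].
  exact: shortcut_entries_flow.
rewrite big_split /=.
have -> : \sum_(x <- P) x.2 / 2 * (edge_count x e)%:R = 2^-1 * edge_flow Rq P e.
  by rewrite mulr_sumr; apply: eq_bigr => x _; rewrite mulrCA mulrA.
have -> : \sum_(x <- P) x.2 / (2 * W%:R) * ((e.2 != None) * long_alive_count x e.1.2)%N%:R
        = (e.2 != None)%:R / (2 * W%:R) * \sum_(x <- P) x.2 * (long_alive_count x e.1.2)%:R.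
  by rewrite mulr_sumr; apply: eq_bigr => x _; rewrite natrM; field.
have Hflow := Hfl e He; have Hlong := long_alive_flow_le e.1.2 Hf.
move: He Hflow Hlong; case: e => [[u s] [v|]] /= He Hflow Hlong; last first.
  have HB : 0 <= B by [].
  by rewrite mul0r mul0r addr0; rewrite /st_cap /= in Hflow *; lra.
have Hshort : 1 / (2 * W%:R) * \sum_(x <- P) x.2 * (long_alive_count x s)%:R <= cmin / 2.
  have -> : cmin / 2 = 1 / (2 * W%:R) * (W%:R * cmin) by field.
  by rewrite ler_wpM2l ?divr_ge0 ?mulr_ge0 // (le_trans Hlong window_large).
have Hcv := cmin_le He.
rewrite /st_cap /= in Hflow *; lra.
Qed.

Lemma shortcut_packing_feasible (P : packing R V k) :
  (D <= pmax)%N -> feasible E c B Rq xpredT P ->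
  feasible E c B Rq (fun ms => (size ms <= pmax)%N) (shortcut_packing P).
Proof.
move=> HDp Hf; have [Hx0 Hreq _] := Hf; split.
- move=> y /flatten_mapP [x /Hx0 [x_ge0 Hp _]].
  rewrite /shortcut_entries; case: ifP => Hs.
    by rewrite inE => /eqP -> /=; split; rewrite ?divr_ge0.
  move/negbT: Hs; rewrite -ltnNge => Hs.
  case/mapP => tau; rewrite mem_iota add0n => Htau -> /=.
  have Hts : (tau <= size x.1.2)%N.
    by apply: leq_trans (ltnW Htau) _; apply: leq_ltn_trans (leq_subr D pmax) Hs.
  have [Hp' Hsize] := shortcut_path_for Hp Hts.
  split => //; first by rewrite divr_ge0 // mulr_ge0.
  by apply: leq_trans Hsize _; rewrite /W in Htau; lia.
- move=> i; have := sum_shortcut_packing P (fun j => j == i) => /= ->.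
  by have := Hreq i; lra.
- by move=> e; exact: shortcut_packing_flow Hf.
Qed.

End ShortcutPacking.

Section Optimum.
Local Open Scope classical_set_scope.
Variables (R : realType) (V : finType) (E : rel V) (c : V -> V -> R) (B : R)
  (k : nat) (Rq : 'I_k -> request V).
Hypotheses (c_gt0 : forall u v, E u v -> 0 < c u v) (B_ge0 : 0 <= B).

Let feasible_throughputs L :=
  [set throughput P | P in [set P : packing R V k | feasible E c B Rq L P]].

Lemma has_sup_feasible_throughputs L : has_sup (feasible_throughputs L).
Proof.
split; first by exists 0, [::]; [exact: feasible_nil | rewrite /throughput big_nil].
by exists k%:R => _ [P HP <-]; exact: throughput_le_requests HP.
Qed.

Lemma throughput_le_OPT_f_with L (P : packing R V k) :
  feasible E c B Rq L P -> throughput P <= OPT_f_with E c B Rq L.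
Proof. by move=> HP; apply: (sup_upper_bound (has_sup_feasible_throughputs L)); exists P. Qed.

Lemma OPT_f_with_ge0 L : 0 <= OPT_f_with E c B Rq L.
Proof.
have := throughput_le_OPT_f_with (feasible_nil c_gt0 B_ge0 Rq L).
by rewrite /throughput big_nil.
Qed.

Lemma OPT_f_le_twice_OPT_f_len (cmin : R) (pmax : nat) :
  (forall u v, E u v -> cmin <= c u v) -> (diam E <= pmax)%N ->
  (diam E)%:R * slice_capacity E c B <= (pmax - diam E).+1%:R * cmin ->
  OPT_f E c B Rq <= 2 * OPT_f_len E c B Rq pmax.
Proof.
move=> cmin_le HDp Hwindow; apply: ge_sup.
  by case: (has_sup_feasible_throughputs xpredT).
move=> _ [P HP <-].
have HQ := shortcut_packing_feasible B_ge0 cmin_le Hwindow HDp HP.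
have := throughput_le_OPT_f_with HQ; rewrite throughput_shortcut_packing.
rewrite -/(OPT_f_len E c B Rq pmax); lra.
Qed.

End Optimum.

Lemma window_bounds (R : realFieldType) (cmin S : R) (d p : nat) :
  0 < cmin -> 0 < S -> (2 * S / cmin + 2) * d%:R <= p%:R ->
  (d <= p)%N /\ d%:R * S <= (p - d).+1%:R * cmin.
Proof.
move=> cmin_gt0 S_gt0 Hp.
have d_ge0 : 0 <= d%:R :> R by [].
have nu_ge0 : 0 <= 2 * S / cmin by rewrite divr_ge0 ?mulr_ge0 ?ltW.
have Hdp : (d <= p)%N by rewrite -(ler_nat R); nra.
have Hp' : (2 * S + 2 * cmin) * d%:R <= p%:R * cmin.
  have -> : (2 * S + 2 * cmin) * d%:R = (2 * S / cmin + 2) * d%:R * cmin.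
    by field; rewrite lt0r_neq0.
  by rewrite ler_pM2r.
by split=> //; rewrite -addn1 natrD natrB //; nra.
Qed.

Theorem lemma3p2 (R : realType) (V : finType) (E : rel V) (c : V -> V -> R)
  (B : R) (k : nat) (Rq : 'I_k -> request V) (cmin : R) (pmax : nat) :
  (forall u v, E u v -> 0 < c u v) ->
  0 <= B ->
  (forall u v, E u v -> cmin <= c u v) ->
  (exists u v, E u v /\ c u v = cmin) ->
  let alpha := cmin / (2 * (\sum_(p : V * V | E p.1 p.2) c p.1 p.2 + #|V|%:R * B)) in
  let nu := alpha^-1 in
  (nu + 2) * (diam E)%:R <= pmax%:R ->
  2^-1 * (1 - (expR 1)^-1) * OPT_f E c B Rq <= OPT_f_len E c B Rq pmax.
Proof.
move=> c_gt0 B_ge0 cmin_le [u [v [Euv cmin_eq]]] alpha nu Hnu.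
have cmin_gt0 : 0 < cmin by rewrite -cmin_eq c_gt0.
have S_gt0 := slice_capacity_gt0 c_gt0 B_ge0 (ex_intro _ u (ex_intro _ v Euv)).
have nuE : nu = 2 * slice_capacity E c B / cmin by rewrite /nu /alpha invf_div.
rewrite nuE in Hnu; have [HDp Hwindow] := window_bounds cmin_gt0 S_gt0 Hnu.
have := OPT_f_le_twice_OPT_f_len Rq c_gt0 B_ge0 cmin_le HDp Hwindow.
have := OPT_f_with_ge0 Rq c_gt0 B_ge0 xpredT; rewrite -/(OPT_f E c B Rq).
have : 0 <= (expR 1 : R)^-1 by rewrite invr_ge0 ltW // expR_gt0.
nra.
Qed.
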